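(* For $r\ge1$ let $H_r$ be the graph with vertex set $\{t_1,\ldots,t_{2r}\}$ and edge set $\{\{t_i,t_{r+i}\}: 1\le i\le r\}$. Then: (a) the graph $\mathcal{H}_r$ of $I_c(H_r)$ is a bipartite $r$-regular graph with $2^r$ vertices and $r2^{r-1}$ edges; (b) if $G$ is an unmixed bipartite graph without isolated vertices and $r=\alpha_0(G)$, then (after labeling the vertices suitably as $t_1,\dots,t_{2r}$) $G$ has the perfect matching $\{\{t_i,t_{r+i}\}\}_{i=1}^r$, and the graph $\mathcal{G}$ of $I_c(G)$ is a subgraph of $\mathcal{H}_r$. In particular $\mathcal{G}$ is bipartite.
   Context: A graph is unmixed if all its minimal vertex covers (inclusion-minimal vertex sets meeting every edge) have the same size; $\alpha_0$ is the minimum size of a vertex cover. For an unmixed graph with minimal vertex covers $C_1,\ldots,C_m$, the graph of its ideal of covers $I_c$ has vertex set $\{C_1,\ldots,C_m\}$ and $\{C_i,C_j\}$ ($i\neq j$) is an edge iff $|C_i\cup C_j|=|C_i|+1$. *)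

From mathcomp Require Import all_boot.
Set Implicit Arguments. Unset Strict Implicit. Unset Printing Implicit Defensive.

Definition simple_graph (T : finType) (e : rel T) : Prop :=
  symmetric e /\ irreflexive e.

Definition is_cover (T : finType) (e : rel T) (C : {set T}) : bool :=
  [forall x, forall y, e x y ==> (x \in C) || (y \in C)].

Definition min_covers (T : finType) (e : rel T) : {set {set T}} :=
  [set C | minset (is_cover e) C].

(* alpha_0: minimum size of a vertex cover (setT is always a cover). *)
Definition alpha0 (T : finType) (e : rel T) : nat :=
  \big[minn/#|T|]_(C : {set T} | is_cover e C) #|C|.

Definition unmixed (T : finType) (e : rel T) : Prop :=
  forall C D, C \in min_covers e -> D \in min_covers e -> #|C| = #|D|.

Definition no_isolated (T : finType) (e : rel T) : Prop :=
  forall x : T, exists y, e x y.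

Definition bipartite (T : finType) (e : rel T) : Prop :=
  exists c : T -> bool, forall x y, e x y -> c x != c y.

(* Adjacency in the graph of the ideal of covers I_c: vertices are the
   minimal covers, {C,D} (C <> D) is an edge iff |C :|: D| = |C| + 1. *)
Definition ic_adj (T : finType) (e : rel T) (C D : {set T}) : bool :=
  [&& C \in min_covers e, D \in min_covers e, C != D &
      #|C :|: D| == #|C|.+1].

Definition ic_edges (T : finType) (e : rel T) : {set {set {set T}}} :=
  [set [set p.1; p.2] | p in [set p : {set T} * {set T} | ic_adj e p.1 p.2]].

(* H_r: vertices t_1..t_{2r} encoded as 0..2r-1, edges {t_i, t_{r+i}}. *)
Definition hr_edge (r : nat) : rel 'I_(r + r) :=
  fun x y => (x + r == y) || (y + r == x).
Arguments hr_edge r x y : clear implicits.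

From mathcomp Require Import all_boot order zify.
Import Order.TTheory.
Set Implicit Arguments. Unset Strict Implicit. Unset Printing Implicit Defensive.

(* A minimal vertex cover of H_r picks exactly one end of each edge
   {t_j, t_(r+j)}.  Code it by the set S of indices j at which it picks
   t_(r+j); the union of two minimal covers has r + d vertices, d the number
   of indices where their codes differ, so they are adjacent in the graph of
   I_c(H_r) iff their codes differ in one index.  That graph is thus the
   r-cube: r-regular on 2^r vertices, bipartite by the parity of |S|, and
   with r 2^(r-1) edges by the handshake lemma.

   If G is bipartite without isolated vertices, both colour classes are
   minimal covers, so unmixedness makes them of size alpha_0 = r and makes
   every cover have at least r vertices.  For S inside a colour class A,
   (A \ S) :|: N(S) is a cover, whence |S| <= |N(S)|; Hall's theorem gives a
   perfect matching, which labels G as a supergraph of H_r on the same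
   vertices.  The preimage of a minimal cover of G is then a cover of H_r with
   r vertices, hence minimal, and adjacency in the graph of I_c is preserved,
   so the graph of I_c(G) embeds in the r-cube. *)

Section SymmetricDifference.
Variable T : finType.
Implicit Types A B : {set T}.

Definition symdiff A B := [set x | (x \in A) (+) (x \in B)].

Lemma symdiffK A : cancel (symdiff A) (symdiff A).
Proof. by move=> B; apply/setP => x; rewrite !inE addKb. Qed.

Lemma symdiffxx A : symdiff A A = set0.
Proof. by apply/setP => x; rewrite !inE addbb. Qed.

Lemma odd_card_symdiff A B : odd #|symdiff A B| = odd #|A| (+) odd #|B|.
Proof.
have -> : symdiff A B = (A :|: B) :\: (A :&: B).
  by apply/setP => x; rewrite !inE; case: (x \in A); case: (x \in B).
have := cardsUI A B; rewrite -(cardsID (A :&: B) (A :|: B)).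
rewrite (setIidPr (subset_trans (subsetIl A B) (subsetUl A B))) => cardE.
by rewrite -oddD -cardE !oddD addbC addKb.
Qed.

Lemma card_symdiff1 A B : #|symdiff A B| = 1 -> exists x, B = symdiff A [set x].
Proof. by move/eqP/cards1P => [x eq_x]; exists x; rewrite -eq_x symdiffK. Qed.

End SymmetricDifference.

Lemma set2_eq (T : finType) (a b c d : T) : a != b ->
  ([set c; d] == [set a; b]) = ((c, d) == (a, b)) || ((c, d) == (b, a)).
Proof.
move=> neq_ab; apply/eqP/idP => [/setP eq_cd|]; last first.
  by case/orP => /eqP[-> ->]; rewrite // setUC.
have := eq_cd a; have := eq_cd b; have := eq_cd c; have := eq_cd d.
rewrite !inE !eqxx /= !orbT !xpair_eqE.
move=> /esym/orP[]/eqP-> /esym/orP[]/eqP->;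
  by rewrite ?eqxx ?orbF //= ?(eq_sym b a) ?(negPf neq_ab).
Qed.

Lemma handshake (X : finType) (adj : rel X) : symmetric adj -> irreflexive adj ->
  #|[set [set p.1; p.2] | p in [set p : X * X | adj p.1 p.2]]| * 2
    = \sum_x #|[set y | adj x y]|.
Proof.
move=> adj_sym adj_irr; set P := [set p : X * X | adj p.1 p.2].
have -> : \sum_x #|[set y | adj x y]| = #|P|.
  rewrite -sum1_card [RHS]big_mkcond (eq_bigr (fun x => \sum_y (adj x y : nat))).
    by rewrite pair_big; apply: eq_bigr => p _; rewrite inE.
  by move=> x _; rewrite -sum1_card big_mkcond; apply: eq_bigr => y _; rewrite inE.
rewrite -[#|P|]sum1_card (partition_big_imset (fun p => [set p.1; p.2])) /=.
rewrite -sum_nat_const.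
apply: eq_bigr => s /imsetP[[a b]]; rewrite inE /= => ab ->.
have neq_ab : a != b by apply: contraTneq ab => ->; rewrite adj_irr.
rewrite (eq_bigl (fun p => p \in [set (a, b); (b, a)])) => [|[c d]].
  by rewrite sum1_card cards2 xpair_eqE (negPf neq_ab).
rewrite !inE set2_eq //=.
apply/andP/idP => [[]//|cd_ab]; split=> //.
by case/orP: cd_ab => /eqP[-> ->]; rewrite // adj_sym.
Qed.

Section HallMarriage.
Variable T : finType.
Implicit Types (A B S : {set T}) (N : T -> {set T}).

Definition nbhd N S := \bigcup_(x in S) N x.

Definition hall_cond N A := forall S, S \subset A -> #|S| <= #|nbhd N S|.

Definition has_sdr N A :=
  exists2 f : T -> T, {in A &, injective f} & {in A, forall x, f x \in N x}.

Lemma nbhdD N M S : nbhd (fun x => N x :\: M) S = nbhd N S :\: M.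
Proof.
apply/setP => y; rewrite inE; apply/bigcupP/andP => [[x xS]|[yM /bigcupP[x xS yN]]].
  by rewrite inE => /andP[yM yN]; split=> //; apply/bigcupP; exists x.
by exists x; rewrite // inE yM.
Qed.

Lemma has_sdrW N N' A :
  {in A, forall x, N x \subset N' x} -> has_sdr N A -> has_sdr N' A.
Proof.
move=> subN [f f_inj fN]; exists f => // x xA.
exact: subsetP (subN x xA) _ (fN x xA).
Qed.

Lemma has_sdrU N M A1 A2 :
  has_sdr (fun x => N x :&: M) A1 -> has_sdr (fun x => N x :\: M) A2 ->
  has_sdr N (A1 :|: A2).
Proof.
move=> [f1 f1_inj f1N] [f2 f2_inj f2N].
have f1M x : x \in A1 -> f1 x \in M by move/f1N; rewrite inE => /andP[].
have f2M x : x \in A2 -> f2 x \notin M by move/f2N; rewrite inE => /andP[].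
exists (fun x => if x \in A1 then f1 x else f2 x) => [x y|x].
  rewrite !inE; case: (boolP (x \in A1)) => xA1; case: (boolP (y \in A1)) => yA1 //=.
  - by move=> _ _; apply: f1_inj.
  - by move=> _ yA2 f12; have := f2M y yA2; rewrite -f12 f1M.
  - by move=> xA2 _ f21; have := f2M x xA2; rewrite f21 f1M.
  - by move=> xA2 yA2; apply: f2_inj.
rewrite inE; case: (boolP (x \in A1)) => [/f1N|_ /f2N]; rewrite inE => /andP[] //.
Qed.

Lemma hall_cond_tight N A S :
  hall_cond N A -> S \subset A -> #|nbhd N S| <= #|S| ->
  hall_cond (fun x => N x :\: nbhd N S) (A :\: S).
Proof.
move=> hallA subSA tightS S' subS'.
have disjS'S : [disjoint S' & S].
  by move: subS'; rewrite subsetD => /andP[].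
have := hallA (S' :|: S); rewrite subUset subSA (subset_trans subS') ?subsetDl //.
rewrite nbhdD /nbhd bigcup_setU -/(nbhd N S') -/(nbhd N S) => /(_ isT).
have := cardsUI (nbhd N S') (nbhd N S); have := cardsID (nbhd N S) (nbhd N S').
have := cardsUI S' S; rewrite (disjoint_setI0 disjS'S) cards0; lia.
Qed.

Lemma hall_cond_surplus N B b :
  (forall S, S \subset B -> S != set0 -> #|S| < #|nbhd N S|) ->
  hall_cond (fun x => N x :\ b) B.
Proof.
move=> surplus S subSB; have [->|nzS] := eqVneq S set0; first by rewrite cards0.
rewrite nbhdD; have := surplus S subSB nzS; have := cardsD1 b (nbhd N S).
by case: (b \in _) => /= ->; lia.
Qed.

(* Induction on |A|: either some nonempty proper S is tight (|N(S)| = |S|),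
   and S and A \ S are matched separately, the latter avoiding N(S); or every
   such S has a surplus, and a is matched to any b in N(a). *)
Theorem hall_marriage N A : hall_cond N A -> has_sdr N A.
Proof.
have [n] := ubnP #|A|; elim: n A N => // n IH A N /ltnSE leAn hallA.
have IHlt B N' : #|B| < #|A| -> hall_cond N' B -> has_sdr N' B.
  by move=> ltBA; apply: IH; apply: leq_trans ltBA leAn.
have [->|[a aA]] := set_0Vmem A; first by exists id => x; rewrite inE.
have [/existsP[S /and3P[ltSA nzS tightS]]|/existsPn surplus] := boolP
  [exists S : {set T}, [&& S \proper A, S != set0 & #|nbhd N S| <= #|S|]].
- have subSA := proper_sub ltSA.
  have -> : A = S :|: (A :\: S).
    by rewrite setDE setUIr setUCr setIT; apply/esym/setUidPr.
  apply: (@has_sdrU _ (nbhd N S)).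
    have hallS : hall_cond N S by move=> S' subS'; apply/hallA/(subset_trans subS').
    apply: has_sdrW (IHlt _ _ (proper_card ltSA) hallS) => x xS.
    by rewrite subsetI subxx; apply: bigcup_sup.
  apply: IHlt (hall_cond_tight hallA subSA tightS).
  by rewrite cardsDS // ltn_subrL card_gt0 nzS; apply/card_gt0P; exists a.
- have [b Nab] : exists b, b \in N a.
    apply/card_gt0P; have := hallA [set a].
    by rewrite sub1set aA cards1 /nbhd big_set1; apply.
  rewrite -(setD1K aA); apply: (@has_sdrU _ [set b]).
    by exists (fun => b) => [x y /set1P-> /set1P->|x /set1P->]; rewrite // inE Nab set11.
  apply: IHlt; first by rewrite (cardsD1 a A) aA.
  apply: hall_cond_surplus => S subS nzS.
  rewrite ltnNge; apply: contraL (surplus S) => tightS.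
  by rewrite tightS nzS andbT negbK (sub_proper_trans subS) ?properD1.
Qed.

End HallMarriage.

Section MinimalCovers.
Variables (T : finType) (e : rel T).
Implicit Types C D : {set T}.

Lemma coverP C :
  reflect (forall x y, e x y -> (x \in C) || (y \in C)) (is_cover e C).
Proof.
apply: (iffP forallP) => [covC x y exy|covC x].
  by have /forallP/(_ y) := covC x; rewrite exy.
by apply/forallP => y; apply/implyP; apply: covC.
Qed.

Lemma min_cover_card_le C D :
  unmixed e -> C \in min_covers e -> is_cover e D -> #|C| <= #|D|.
Proof.
move=> unm minC /minset_exists[B minB subBD].
by rewrite (unm C B) ?subset_leq_card // inE.
Qed.

Lemma alpha0_unmixed C : unmixed e -> C \in min_covers e -> alpha0 e = #|C|.
Proof.
move=> unm minC; apply/eqP; rewrite eqn_leq /alpha0 -minEnat; apply/andP; split.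
  by apply: (@bigmin_le_cond _ nat); move: minC; rewrite inE => /minsetP[].
apply: (@le_bigmin _ nat) => [|D]; first exact: max_card.
exact: min_cover_card_le.
Qed.

Lemma crossing_min_cover (A : {set T}) :
  no_isolated e -> (forall x y, e x y -> (x \in A) != (y \in A)) ->
  A \in min_covers e.
Proof.
move=> noiso cross; rewrite inE; apply/minsetP; split.
  by apply/coverP => x y /cross; case: (x \in A); case: (y \in A).
move=> B /coverP covB subBA; apply/eqP; rewrite eqEsubset subBA /=.
apply/subsetP => x xA; have [y exy] := noiso x.
have /negPf yA : y \notin A by have := cross _ _ exy; rewrite xA; case: (y \in A).
by case/orP: (covB _ _ exy) => // /(subsetP subBA); rewrite yA.
Qed.

Lemma ic_adj_sym C D : unmixed e -> ic_adj e C D -> ic_adj e D C.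
Proof.
move=> unm /and4P[minC minD neqCD cardCD].
by rewrite /ic_adj minC minD eq_sym neqCD setUC (unm D C).
Qed.

Lemma crossing_hall_cond (A : {set T}) :
  symmetric e -> unmixed e -> A \in min_covers e ->
  (forall x y, e x y -> (x \in A) != (y \in A)) ->
  hall_cond (fun x => [set y | e x y]) A.
Proof.
move=> e_sym unm minA cross S subSA; set NS := nbhd _ S.
have covX : is_cover e ((A :\: S) :|: NS).
  have cov_from u v : e u v -> u \in A -> (u \in A :\: S) || (v \in NS).
    move=> euv uA; rewrite !inE uA andbT; case: (boolP (u \in S)) => //= uS.
    by apply/bigcupP; exists u; rewrite ?inE.
  apply/coverP => x y exy; rewrite !in_setU; have := cross _ _ exy.
  have [xA _|_ yA] := boolP (x \in A).
    by case/orP: (cov_from x y exy xA) => ->; rewrite ?orbT.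
  have eyx : e y x by rewrite e_sym.
  by case/orP: (cov_from y x eyx (negbNE yA)) => ->; rewrite ?orbT.
have := min_cover_card_le unm minA covX.
have := (leq_card_setU (A :\: S) NS).1; rewrite cardsDS //.
have := subset_leq_card subSA; lia.
Qed.

End MinimalCovers.

Lemma bipartite_hom (T U : finType) (adj : rel T) (adj' : rel U) (g : T -> U) :
  (forall x y, adj x y -> adj' (g x) (g y)) -> bipartite adj' -> bipartite adj.
Proof. by move=> hom [c col]; exists (c \o g) => x y /hom /col. Qed.

Section HrGraph.
Variable r : nat.
Implicit Types (j k : 'I_r) (b c : bool) (x y : 'I_(r + r)).
Implicit Types (S : {set 'I_r}) (X : {set 'I_(r + r)}).
Local Notation E := (hr_edge r).

(* [hr_vertex j false] and [hr_vertex j true] are the ends t_j and t_(r+j)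
   of the j-th edge of H_r. *)
Definition hr_vertex j b : 'I_(r + r) := unsplit (if b then inr j else inl j).
Definition hr_index x : 'I_r := match split x with inl j | inr j => j end.
Definition hr_side x : bool := if split x is inr _ then true else false.
Definition hr_mate x := hr_vertex (hr_index x) (~~ hr_side x).

Lemma hr_index_vertex j b : hr_index (hr_vertex j b) = j.
Proof. by rewrite /hr_index /hr_vertex unsplitK; case: b. Qed.

Lemma hr_side_vertex j b : hr_side (hr_vertex j b) = b.
Proof. by rewrite /hr_side /hr_vertex unsplitK; case: b. Qed.

Lemma hr_vertexK x : hr_vertex (hr_index x) (hr_side x) = x.
Proof. by rewrite -[RHS]splitK /hr_index /hr_side /hr_vertex; case: (split x). Qed.

Lemma hr_vertex_eq j b k c : (hr_vertex j b == hr_vertex k c) = (j == k) && (b == c).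
Proof.
apply/eqP/andP => [eq_jk|[/eqP-> /eqP->] //].
by split; apply/eqP; [have := congr1 hr_index eq_jk | have := congr1 hr_side eq_jk];
   rewrite ?hr_index_vertex ?hr_side_vertex.
Qed.

Lemma hr_vertex_inj (F : 'I_r -> bool) : injective (fun j => hr_vertex j (F j)).
Proof. by move=> j k /(congr1 hr_index); rewrite !hr_index_vertex. Qed.

Lemma hr_edgeE x y : E x y = (y == hr_mate x).
Proof.
rewrite -(hr_vertexK x) -(hr_vertexK y) /hr_mate.
rewrite !hr_index_vertex !hr_side_vertex hr_vertex_eq.
move: (hr_index x) (hr_index y) (hr_side x) (hr_side y) => j k b c.
rewrite /hr_edge /hr_vertex -!val_eqE /= eq_sym; have := ltn_ord j; have := ltn_ord k.
by case: b; case: c => /= ? ?; apply/idP/idP; lia.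
Qed.

Lemma hr_mate_vertex j b : hr_mate (hr_vertex j b) = hr_vertex j (~~ b).
Proof. by rewrite /hr_mate hr_index_vertex hr_side_vertex. Qed.

Lemma hr_coverP X : reflect (forall x, (x \in X) || (hr_mate x \in X)) (is_cover E X).
Proof.
apply: (iffP (coverP _ _)) => [covX x|covX x y]; first by apply: covX; rewrite hr_edgeE.
by rewrite hr_edgeE => /eqP->.
Qed.

Definition hr_cover S := [set x | hr_side x == (hr_index x \in S)].
Definition hr_code X := [set j | hr_vertex j true \in X].

Lemma in_hr_cover j b S : (hr_vertex j b \in hr_cover S) = (b == (j \in S)).
Proof. by rewrite inE hr_index_vertex hr_side_vertex. Qed.

Lemma hr_coverK : cancel hr_cover hr_code.
Proof. by move=> S; apply/setP => j; rewrite inE in_hr_cover; case: (j \in S). Qed.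

Lemma hr_cover_cover S : is_cover E (hr_cover S).
Proof.
apply/hr_coverP => x; rewrite -(hr_vertexK x) hr_mate_vertex !in_hr_cover.
by case: (hr_side x); case: (_ \in S).
Qed.

Lemma hr_cover_code_sub X : is_cover E X -> hr_cover (hr_code X) \subset X.
Proof.
move/hr_coverP => covX; apply/subsetP => x; rewrite -(hr_vertexK x) in_hr_cover inE.
move: (hr_index x) (hr_side x) => j [/eqP<- // | /eqP/esym/negbT vjX].
by have := covX (hr_vertex j false); rewrite hr_mate_vertex (negPf vjX) orbF.
Qed.

Lemma card_hr_cover S : #|hr_cover S| = r.
Proof.
have -> : hr_cover S = [set hr_vertex j (j \in S) | j in 'I_r].
  apply/setP => x; rewrite -(hr_vertexK x) in_hr_cover.
  apply/eqP/imsetP => [->|[j _ /eqP]]; first by exists (hr_index x).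
  by rewrite hr_vertex_eq => /andP[/eqP-> /eqP->].
by rewrite card_imset ?card_ord //; apply: hr_vertex_inj.
Qed.

Lemma hr_cover_card_ge X : is_cover E X -> r <= #|X|.
Proof.
by move=> covX; have := subset_leq_card (hr_cover_code_sub covX); rewrite card_hr_cover.
Qed.

Lemma hr_cover_min S : hr_cover S \in min_covers E.
Proof.
rewrite inE; apply/minsetP; split=> [|X covX subX]; first exact: hr_cover_cover.
by apply/eqP; rewrite eqEcard subX card_hr_cover hr_cover_card_ge.
Qed.

Lemma hr_min_coverE X : X \in min_covers E -> hr_cover (hr_code X) = X.
Proof.
rewrite inE => /minsetP[covX minX].
by apply: minX (hr_cover_code_sub covX); apply: hr_cover_cover.
Qed.

Lemma hr_small_cover_min X : is_cover E X -> #|X| <= r -> X \in min_covers E.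
Proof.
move=> covX leXr; suff <- : hr_cover (hr_code X) = X by apply: hr_cover_min.
by apply/eqP; rewrite eqEcard hr_cover_code_sub // card_hr_cover.
Qed.

Lemma hr_unmixed : unmixed E.
Proof. by move=> C D /hr_min_coverE<- /hr_min_coverE<-; rewrite !card_hr_cover. Qed.

Lemma card_hr_min_covers : #|min_covers E| = 2 ^ r.
Proof.
have -> : min_covers E = hr_cover @: [set: {set 'I_r}].
  apply/setP => C; apply/idP/imsetP => [/hr_min_coverE<-|[S _ ->]].
    by exists (hr_code C).
  exact: hr_cover_min.
rewrite card_imset; last exact: can_inj hr_coverK.
by rewrite -powersetT card_powerset cardsT card_ord.
Qed.

Lemma hr_coverD S S' :
  hr_cover S' :\: hr_cover S = [set hr_vertex j (j \in S') | j in symdiff S S'].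
Proof.
apply/setP => x; rewrite -(hr_vertexK x) inE !in_hr_cover.
apply/andP/imsetP => [[nSx /eqP Sx]|[j]]; last first.
  rewrite inE => Sj /eqP; rewrite hr_vertex_eq => /andP[/eqP-> /eqP->].
  by rewrite eqxx; split=> //; case: (j \in S) Sj; case: (j \in S').
exists (hr_index x); last by rewrite Sx.
by rewrite inE -Sx; case: (hr_side x) nSx; case: (hr_index x \in S).
Qed.

Lemma card_hr_coverU S S' : #|hr_cover S :|: hr_cover S'| = r + #|symdiff S S'|.
Proof.
have := cardsUI (hr_cover S) (hr_cover S'); have := cardsID (hr_cover S) (hr_cover S').
rewrite hr_coverD card_imset; last exact: hr_vertex_inj.
rewrite [hr_cover S' :&: _]setIC !card_hr_cover => capD UI; apply/eqP.
by rewrite -(eqn_add2r #|hr_cover S :&: hr_cover S'|) UI -addnA eqn_add2l addnC capD.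
Qed.

Lemma hr_ic_adjE C D :
  ic_adj E C D =
  [&& C \in min_covers E, D \in min_covers E & #|symdiff (hr_code C) (hr_code D)| == 1].
Proof.
rewrite /ic_adj; case: (boolP (C \in _)) => //= /hr_min_coverE eqC.
case: (boolP (D \in _)) => //= /hr_min_coverE eqD.
rewrite -[in LHS]eqC -[in LHS]eqD (inj_eq (can_inj hr_coverK)).
rewrite card_hr_coverU card_hr_cover -addn1 eqn_add2l.
by case: eqVneq => [->|]; rewrite ?symdiffxx ?cards0.
Qed.

Lemma hr_ic_bipartite : bipartite (ic_adj E).
Proof.
exists (fun C => odd #|hr_code C|) => C D.
rewrite hr_ic_adjE => /and3P[_ _ /eqP/(congr1 odd)]; rewrite odd_card_symdiff /=.
by case: (odd _); case: (odd _).
Qed.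

Lemma hr_ic_nbhd S :
  [set D | ic_adj E (hr_cover S) D] = [set hr_cover (symdiff S [set j]) | j in 'I_r].
Proof.
apply/setP => D; rewrite inE hr_ic_adjE hr_cover_min hr_coverK /=.
apply/andP/imsetP => [[minD /eqP/card_symdiff1[j eq_j]]|[j _ ->]].
  by exists j; rewrite // -eq_j hr_min_coverE.
by rewrite hr_cover_min hr_coverK symdiffK cards1.
Qed.

Lemma hr_ic_degree C : C \in min_covers E -> #|[set D | ic_adj E C D]| = r.
Proof.
move/hr_min_coverE<-; rewrite hr_ic_nbhd card_imset ?card_ord //.
by move=> j k /(can_inj hr_coverK)/(can_inj (symdiffK _))/set1_inj.
Qed.

Lemma card_hr_ic_edges : #|ic_edges E| = r * 2 ^ r.-1.
Proof.
have ic_sym : symmetric (ic_adj E).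
  by move=> C D; apply/idP/idP; apply: ic_adj_sym hr_unmixed.
have ic_irr : irreflexive (ic_adj E) by move=> C; rewrite /ic_adj eqxx !andbF.
apply/eqP; rewrite -(eqn_pmul2r (isT : 0 < 2)) handshake //.
rewrite (bigID (mem (min_covers E))) /=.
rewrite [X in _ + X == _]big1 => [|C /negPf notminC]; last first.
  by apply/eqP; rewrite cards_eq0; apply/eqP/setP => D; rewrite !inE /ic_adj notminC.
rewrite (eq_bigr (fun=> r)) => [|C]; last exact: hr_ic_degree.
rewrite sum_nat_const card_hr_min_covers addn0 -mulnA -expnSr.
by case: (posnP r) => [->|r_gt0]; rewrite ?muln0 // prednK // mulnC.
Qed.
End HrGraph.

Lemma matching_hr_labelling (T : finType) (e : rel T) (A : {set T}) (f : T -> T) :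
  symmetric e -> (forall x y, e x y -> (x \in A) != (y \in A)) ->
  {in A &, injective f} -> {in A, forall x, e x (f x)} -> #|~: A| = #|A| ->
  exists2 phi : 'I_(#|A| + #|A|) -> T,
    bijective phi & forall x y, hr_edge _ x y -> e (phi x) (phi y).
Proof.
move=> e_sym cross f_inj ef cardAC.
have fA x : x \in A -> f x \notin A.
  by move=> xA; have := cross _ _ (ef x xA); rewrite xA; case: (f x \in A).
pose a (j : 'I_#|A|) := enum_val j; have aA j : a j \in A := enum_valP j.
pose phi x := if hr_side x then f (a (hr_index x)) else a (hr_index x).
have phi_inj : injective phi.
  move=> x y; rewrite -(hr_vertexK x) -(hr_vertexK y) /phi !hr_index_vertex !hr_side_vertex.
  case: (hr_side x); case: (hr_side y) => /=.
  - by move/(f_inj _ _ (aA _) (aA _))/enum_val_inj->.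
  - by move=> eq_fa; have := fA _ (aA (hr_index x)); rewrite eq_fa aA.
  - by move=> eq_af; have := fA _ (aA (hr_index y)); rewrite -eq_af aA.
  - by move/enum_val_inj->.
exists phi; first by apply: (inj_card_bij phi_inj); rewrite card_ord -(cardsC A) cardAC.
move=> x y; rewrite hr_edgeE => /eqP->.
rewrite /phi /hr_mate hr_index_vertex hr_side_vertex.
by case: (hr_side x) => /=; [rewrite e_sym|]; apply: ef.
Qed.

Lemma unmixed_bipartite_hr_labelling (T : finType) (e : rel T) :
  symmetric e -> unmixed e -> bipartite e -> no_isolated e ->
  exists2 phi : 'I_(alpha0 e + alpha0 e) -> T,
    bijective phi & forall x y, hr_edge _ x y -> e (phi x) (phi y).
Proof.
move=> e_sym unm [c col] noiso; pose A := [set x | c x].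
have crossA x y : e x y -> (x \in A) != (y \in A) by rewrite !inE; apply: col.
have crossAC x y : e x y -> (x \in ~: A) != (y \in ~: A).
  by move/crossA; rewrite !in_setC; case: (x \in A); case: (y \in A).
have minA := crossing_min_cover noiso crossA.
have [f f_inj fN] := hall_marriage (crossing_hall_cond e_sym unm minA crossA).
rewrite (alpha0_unmixed unm minA).
apply: matching_hr_labelling e_sym crossA f_inj _ _ => [x /fN|]; first by rewrite inE.
exact: unm (crossing_min_cover noiso crossAC) minA.
Qed.

Section HrPreimage.
Variables (T : finType) (e : rel T) (r : nat) (phi : 'I_(r + r) -> T).
Hypotheses (phi_bij : bijective phi)
  (phi_hom : forall x y, hr_edge r x y -> e (phi x) (phi y))
  (card_min_cover : {in min_covers e, forall C : {set T}, #|C| = r}).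

Lemma card_hr_preim (C : {set T}) : #|phi @^-1: C| = #|C|.
Proof. exact: on_card_preimset (onW_bij _ phi_bij). Qed.

Lemma hr_preim_min_cover C :
  C \in min_covers e -> phi @^-1: C \in min_covers (hr_edge r).
Proof.
move=> minC; apply: hr_small_cover_min; last by rewrite card_hr_preim card_min_cover.
move: minC; rewrite inE => /minsetP[/coverP covC _].
by apply/coverP => x y /phi_hom/covC; rewrite !inE.
Qed.

Lemma hr_preim_ic_adj C D :
  ic_adj e C D -> ic_adj (hr_edge r) (phi @^-1: C) (phi @^-1: D).
Proof.
case/and4P => minC minD neqCD cardCD.
rewrite /ic_adj !hr_preim_min_cover // -preimsetU !card_hr_preim cardCD andbT /=.
apply: contra neqCD => /eqP eqCD; apply/eqP/setP => y; case: phi_bij => g _ gK.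
by rewrite -(gK y); move/setP: eqCD => /(_ (g y)); rewrite !inE.
Qed.

End HrPreimage.

Theorem proposition4p9 :
  (forall r : nat, 0 < r ->
     [/\ bipartite (ic_adj (hr_edge r)),
         forall C, C \in min_covers (hr_edge r) ->
           #|[set D | ic_adj (hr_edge r) C D]| = r,
         #|min_covers (hr_edge r)| = 2 ^ r &
         #|ic_edges (hr_edge r)| = r * 2 ^ r.-1])
  /\
  (forall (T : finType) (e : rel T) (r : nat),
     simple_graph e -> unmixed e -> bipartite e -> no_isolated e ->
     r = alpha0 e ->
     exists phi : 'I_(r + r) -> T,
       [/\ bijective phi,
           forall x y, hr_edge r x y -> e (phi x) (phi y),
           forall C, C \in min_covers e ->
             phi @^-1: C \in min_covers (hr_edge r),
           forall C D, ic_adj e C D ->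
             ic_adj (hr_edge r) (phi @^-1: C) (phi @^-1: D) &
           bipartite (ic_adj e)]).
Proof.
split=> [r _ | T e r [e_sym _] unm bip noiso ->].
  split; [exact: hr_ic_bipartite | exact: hr_ic_degree |
          exact: card_hr_min_covers | exact: card_hr_ic_edges].
have [phi phi_bij phi_hom] := unmixed_bipartite_hr_labelling e_sym unm bip noiso.
have card_min : {in min_covers e, forall C : {set T}, #|C| = alpha0 e}.
  by move=> C /(alpha0_unmixed unm).
have preim_adj := hr_preim_ic_adj phi_bij phi_hom card_min.
exists phi; split=> //; first exact: hr_preim_min_cover.
exact: bipartite_hom preim_adj (hr_ic_bipartite _).
Qed.
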